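(* Let $(\mathcal O,\mathcal D)$ be an antichain duality of $\sigma$-structures such that the members of $\mathcal O$ are cores. Then $|\mathcal D|=1$ if and only if the members of $\mathcal O$ are connected.
   Context: A type $\sigma$ is a finite set of relation symbols with arities; a $\sigma$-structure $\mathbf A$ is a finite set $V(\mathbf A)$ with an $r$-ary relation $R(\mathbf A)$ for each $R\in\sigma$ of arity $r$; homomorphisms are relation-preserving maps and $\mathbf A\to\mathbf B$ means one exists. $\mathbf A$ is a core if every homomorphically equivalent structure has at least as many vertices. $(\mathcal O,\mathcal D)$ is a duality pair if for every $\sigma$-structure $\mathbf A$: $\mathbf A\to\mathbf D$ for some $\mathbf D\in\mathcal D$ iff no $\mathbf T\in\mathcal O$ satisfies $\mathbf T\to\mathbf A$; it is an antichain duality if moreover $\mathcal O\cup\mathcal D$ is an antichain (no homomorphism between two distinct members). $\mathbf A$ is connected if its incidence multigraph (bipartite, with parts $V(\mathbf A)$ and the blocks $(R,(x_1,\dots,x_r))$, $(x_1,\dots,x_r)\in R(\mathbf A)$, with an edge from $x_i$ to the block for each $i$) is connected. *)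

From mathcomp Require Import all_boot.
Set Implicit Arguments. Unset Strict Implicit. Unset Printing Implicit Defensive.

(* A sigma-structure has vertex set 'I_n (every finite
   set is in bijection with some 'I_n) and, for each symbol s, an ar s-ary
   relation given as a set of ar s-tuples of vertices. *)
Section Structures.
Variables (S : finType) (ar : S -> nat).

Record struct := Struct {
  vn : nat;
  rels : forall s : S, {set (ar s).-tuple 'I_vn}
}.

Definition hom (A B : struct) : Prop :=
  exists f : 'I_(vn A) -> 'I_(vn B),
    forall (s : S) (t : (ar s).-tuple 'I_(vn A)),
      t \in rels A s -> map_tuple f t \in rels B s.

Definition is_core (A : struct) : Prop :=
  forall B : struct, hom A B -> hom B A -> vn A <= vn B.

(* Incidence multigraph: nodes are vertices (inl) and blocks (inr (s; t)) with
   t \in rels A s; vertex x is joined to block (s; t) for each position of x in t. *)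
Definition inode (A : struct) : finType :=
  ('I_(vn A) + {s : S & (ar s).-tuple 'I_(vn A)})%type.

Definition in_graph (A : struct) (u : inode A) : bool :=
  match u with
  | inl _ => true
  | inr b => tagged b \in rels A (tag b)
  end.

Definition incident (A : struct) (u v : inode A) : bool :=
  match u, v with
  | inl x, inr b => x \in (tagged b : seq _)
  | inr b, inl x => x \in (tagged b : seq _)
  | _, _ => false
  end.

Definition iedge (A : struct) : rel (inode A) :=
  fun u v => [&& in_graph u, in_graph v & incident u v].

Definition connected (A : struct) : Prop :=
  (exists u : inode A, in_graph u) /\
  forall u v : inode A, in_graph u -> in_graph v -> connect (@iedge A) u v.

Definition duality_pair (O D : struct -> Prop) : Prop :=
  forall A : struct,
    (exists2 B, D B & hom A B) <-> ~ (exists2 T, O T & hom T A).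

Definition antichain (C : struct -> Prop) : Prop :=
  forall A B : struct, C A -> C B -> A <> B -> ~ hom A B.

Definition antichain_duality (O D : struct -> Prop) : Prop :=
  duality_pair O D /\ antichain (fun A => O A \/ D A).

End Structures.

From mathcomp Require Import all_boot.
From Stdlib Require Import Classical.
Set Implicit Arguments. Unset Strict Implicit. Unset Printing Implicit Defensive.

(* If D = {D0}, an obstruction T that were disconnected would split into two
   proper substructures.  No obstruction maps into a proper substructure of T:
   it would map into T, hence be T by the antichain property, and T, being a
   core, has no non-surjective endomorphism.  So both parts map to D0, and
   gluing gives T -> D0, which the duality forbids.  Conversely, if all
   obstructions are connected, no obstruction maps into the empty structure,
   so D has a member D0.  For any B in D the disjoint union B + D0 admits no
   obstruction either, since a connected structure mapping into a disjoint
   union maps into one summand; so B + D0 maps to some D1 in D, and the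
   antichain property forces B = D1 = D0. *)

Section Duality.
Variables (S : finType) (ar : S -> nat).
Local Notation st := (struct ar).

Lemma map_tuple_id n k (t : k.-tuple 'I_n) : map_tuple id t = t.
Proof. by apply: val_inj; rewrite /= map_id. Qed.

Lemma map_tuple_comp m n p k (f : 'I_m -> 'I_n) (g : 'I_n -> 'I_p)
    (t : k.-tuple 'I_m) :
  map_tuple (g \o f) t = map_tuple g (map_tuple f t).
Proof. by apply: val_inj; rewrite /= map_comp. Qed.

Lemma eq_map_tuple m n k (f g : 'I_m -> 'I_n) (t : k.-tuple 'I_m) :
  f =1 g -> map_tuple f t = map_tuple g t.
Proof. by move=> fg; apply/val_inj/eq_map. Qed.

Lemma map_tuple_inj m n k (f : 'I_m -> 'I_n) :
  injective f -> injective (fun t : k.-tuple 'I_m => map_tuple f t).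
Proof. by move=> fI u v /(congr1 val) /(inj_map fI) /val_inj. Qed.

Definition is_hom (A B : st) (f : 'I_(vn A) -> 'I_(vn B)) : Prop :=
  forall s t, t \in rels A s -> map_tuple f t \in rels B s.

Lemma hom_refl (A : st) : hom A A.
Proof. by exists id => s t; rewrite map_tuple_id. Qed.

Lemma hom_trans (A B C : st) : hom A B -> hom B C -> hom A C.
Proof.
move=> [f homf] [g homg]; exists (g \o f) => s t At.
by rewrite map_tuple_comp; apply/homg/homf.
Qed.

Lemma hom_of_empty_incidence (A B : st) :
  ~ (exists u : inode A, in_graph u) -> hom A B.
Proof.
move=> noA.
have /fin_all_exists[f _] : forall x : 'I_(vn A), exists y : 'I_(vn B), True.
  by move=> x; case: noA; exists (inl x).
by exists f => s t Ht; case: noA; exists (inr (existT _ s t)).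
Qed.

Lemma antichain_hom_eq (C : st -> Prop) (A B : st) :
  antichain C -> C A -> C B -> hom A B -> A = B.
Proof. by move=> HC HA HB AB; apply: NNPP => /(HC A B HA HB); apply. Qed.

Definition substruct (A : st) (V : {set 'I_(vn A)})
    (keep : forall s, pred ((ar s).-tuple 'I_(vn A))) : st :=
  {| vn := #|V|;
     rels := fun s => [set t : (ar s).-tuple 'I_#|V| |
        (map_tuple enum_val t \in rels A s) && keep s (map_tuple enum_val t)] |}.

Definition proper_substruct (A : st) (V : {set 'I_(vn A)})
    (keep : forall s, pred ((ar s).-tuple 'I_(vn A))) : Prop :=
  (exists x, x \notin V) \/ (exists s t, t \in rels A s /\ ~~ keep s t).

Lemma substruct_hom (A : st) (V : {set 'I_(vn A)}) keep : hom (@substruct A V keep) A.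
Proof. by exists enum_val => s t; rewrite inE => /andP[]. Qed.

Lemma lift_enum_val_tuple n k (V : {set 'I_n}) (t : k.-tuple 'I_n) :
  {subset t <= V} -> exists t1 : k.-tuple 'I_#|V|, map_tuple enum_val t1 = t.
Proof.
move=> tV.
have /fin_all_exists[h Hh] : forall j : 'I_k, exists i : 'I_#|V|, enum_val i = tnth t j.
  move=> j; have Vj : tnth t j \in V by apply/tV/mem_tnth.
  by exists (enum_rank_in Vj (tnth t j)); rewrite enum_rankK_in.
by exists [tuple h j | j < k]; apply: eq_from_tnth => j; rewrite tnth_map tnth_mktuple.
Qed.

Lemma hom_substruct (A : st) (V : {set 'I_(vn A)}) keep (g : 'I_(vn A) -> 'I_(vn A)) :
  (forall x, g x \in V) ->
  (forall s t, t \in rels A s ->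
     (map_tuple g t \in rels A s) && keep s (map_tuple g t)) ->
  hom A (@substruct A V keep).
Proof.
move=> gV homg_keep.
have /fin_all_exists[h hg] : forall x, exists i : 'I_#|V|, enum_val i = g x.
  by move=> x; exists (enum_rank_in (gV x) (g x)); rewrite enum_rankK_in.
by exists h => s t At; rewrite inE -map_tuple_comp (eq_map_tuple _ hg) homg_keep.
Qed.

Lemma core_endo_inj (A : st) (g : 'I_(vn A) -> 'I_(vn A)) :
  is_core A -> is_hom g -> injective g.
Proof.
move=> coreA homg; pose V := g @: [set: 'I_(vn A)].
have A_V : hom A (@substruct A V (fun _ _ => true)).
  by apply: (hom_substruct (g := g)) => [x | s t /homg ->]; rewrite ?imset_f.
have /imset_injP gI : #|V| == #|[set: 'I_(vn A)]|.
  rewrite eqn_leq cardsT card_ord (coreA _ A_V (substruct_hom _ _)) andbT.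
  by rewrite -[X in _ <= X]card_ord max_card.
by move=> x y; apply: gI; rewrite inE.
Qed.

Lemma inj_endo_rels_onto (A : st) (g : 'I_(vn A) -> 'I_(vn A)) s t :
  injective g -> is_hom g -> t \in rels A s ->
  exists2 t', t' \in rels A s & t = map_tuple g t'.
Proof.
move=> gI homg At.
have img : [set map_tuple g u | u in rels A s] = rels A s.
  apply/eqP; rewrite eqEcard card_imset ?leqnn ?andbT; last exact: map_tuple_inj.
  by apply/subsetP => _ /imsetP[u Au ->]; exact: homg.
by move: At; rewrite -{1}img => /imsetP[u Au ->]; exists u.
Qed.

Lemma core_not_hom_proper_substruct (A : st) (V : {set 'I_(vn A)}) keep :
  is_core A -> proper_substruct V keep -> ~ hom A (@substruct A V keep).
Proof.
move=> coreA proper [h homh]; pose g x := enum_val (h x).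
have homg_keep s t :
    t \in rels A s -> (map_tuple g t \in rels A s) && keep s (map_tuple g t).
  by move=> /homh; rewrite inE -map_tuple_comp.
have homg : is_hom g by move=> s t /homg_keep /andP[].
have gI := core_endo_inj coreA homg.
case: proper => [[x Vx] | [s [t [At keep_t]]]].
- have [g' _ g'K] := injF_bij gI.
  by move: Vx; rewrite -(g'K x) /g enum_valP.
- have [t' At' Et] := inj_endo_rels_onto gI homg At.
  by move: keep_t; rewrite Et; case/andP: (homg_keep s t' At') => _ ->.
Qed.

Lemma substruct_lift_rels (A : st) (V : {set 'I_(vn A)})
    (keep : forall s, pred ((ar s).-tuple 'I_(vn A))) s t :
  t \in rels A s -> keep s t -> {subset t <= V} ->
  exists2 t1, t1 \in rels (@substruct A V keep) s & map_tuple enum_val t1 = t.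
Proof.
move=> At keep_t /lift_enum_val_tuple[t1 Et1].
by exists t1; rewrite // inE Et1 At keep_t.
Qed.

Lemma hom_glue (A B : st) (V : {set 'I_(vn A)})
    (keep : forall s, pred ((ar s).-tuple 'I_(vn A))) :
  (forall s t, t \in rels A s -> keep s t -> {subset t <= V}) ->
  (forall s t, t \in rels A s -> ~~ keep s t -> {subset t <= ~: V}) ->
  hom (@substruct A V keep) B ->
  hom (@substruct A (~: V) (fun s t => ~~ keep s t)) B ->
  hom A B.
Proof.
move=> keepV nkeepV [g1 homg1] [g2 homg2].
have /fin_all_exists[f fg] : forall x : 'I_(vn A), exists y : 'I_(vn B),
    (forall i, enum_val i = x -> g1 i = y) /\ (forall j, enum_val j = x -> g2 j = y).
  move=> x; case: (boolP (x \in V)) => Vx; [|have V'x : x \in ~: V by rewrite inE].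
  - exists (g1 (enum_rank_in Vx x)); split=> i Ei; subst x; first by rewrite enum_valK_in.
    by have := enum_valP i; rewrite inE Vx.
  - exists (g2 (enum_rank_in V'x x)); split=> i Ei; subst x; last by rewrite enum_valK_in.
    by have := enum_valP i; rewrite (negbTE Vx).
exists f => s t At; case: (boolP (keep s t)) => keep_t.
- have [t1 Vt1 <-] := substruct_lift_rels At keep_t (keepV s t At keep_t).
  by rewrite -map_tuple_comp (eq_map_tuple _ (fun i => esym ((fg _).1 i erefl))) homg1.
- have [t1 Vt1 <-] := substruct_lift_rels (keep := fun s t => ~~ keep s t)
    At keep_t (nkeepV s t At keep_t).
  by rewrite -map_tuple_comp (eq_map_tuple _ (fun i => esym ((fg _).2 i erefl))) homg2.
Qed.

Definition lshift_rels (B C : st) s : {set (ar s).-tuple 'I_(vn B + vn C)} :=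
  [set map_tuple (lshift (vn C)) t | t in rels B s].

Definition rshift_rels (B C : st) s : {set (ar s).-tuple 'I_(vn B + vn C)} :=
  [set map_tuple (@rshift (vn B) (vn C)) t | t in rels C s].

Definition dunion (B C : st) : st :=
  {| vn := vn B + vn C; rels := fun s => lshift_rels B C s :|: rshift_rels B C s |}.

Lemma hom_dunionl (B C : st) : hom B (dunion B C).
Proof. by exists (lshift (vn C)) => s t Bt; rewrite inE imset_f. Qed.

Lemma hom_dunionr (B C : st) : hom C (dunion B C).
Proof. by exists (@rshift (vn B) (vn C)) => s t Ct; rewrite inE imset_f ?orbT. Qed.

Lemma lshift_rels_lt (B C : st) s u x :
  u \in lshift_rels B C s -> x \in u -> x < vn B.
Proof. by case/imsetP=> t _ -> /mapP[i _ ->] /=; rewrite ltn_ord. Qed.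

Lemma rshift_rels_ge (B C : st) s u x :
  u \in rshift_rels B C s -> x \in u -> vn B <= x.
Proof. by case/imsetP=> t _ -> /mapP[i _ ->]; rewrite leq_addr. Qed.

Lemma dunion_rels_side (B C : st) s u x :
  u \in rels (dunion B C) s -> x \in u -> (x < vn B) = (u \in lshift_rels B C s).
Proof.
case/setUP=> [Lu | Ru] ux; first by rewrite Lu (lshift_rels_lt Lu ux).
rewrite ltnNge (rshift_rels_ge Ru ux); apply/esym/negP => Lu.
by have := lshift_rels_lt Lu ux; rewrite ltnNge (rshift_rels_ge Ru ux).
Qed.

Lemma hom_of_lshift (T B C : st) (f : 'I_(vn T) -> 'I_(vn B + vn C)) :
  (forall x, f x < vn B) ->
  (forall s t, t \in rels T s -> map_tuple f t \in lshift_rels B C s) -> hom T B.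
Proof.
move=> fB homf; pose g x := Ordinal (fB x).
exists g => s t /homf /imsetP[u Bu].
rewrite (@eq_map_tuple _ _ _ f (lshift (vn C) \o g)); last by move=> x; apply: val_inj.
by rewrite map_tuple_comp => /map_tuple_inj -> //; exact: lshift_inj.
Qed.

Lemma hom_of_rshift (T B C : st) (f : 'I_(vn T) -> 'I_(vn B + vn C)) :
  (forall x, vn B <= f x) ->
  (forall s t, t \in rels T s -> map_tuple f t \in rshift_rels B C s) -> hom T C.
Proof.
move=> fC homf.
have gC x : f x - vn B < vn C by rewrite ltn_subLR // ltn_ord.
pose g x := Ordinal (gC x).
exists g => s t /homf /imsetP[u Cu].
rewrite (@eq_map_tuple _ _ _ f (@rshift (vn B) (vn C) \o g)); last first.
  by move=> x; apply: val_inj; rewrite /= subnKC.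
by rewrite map_tuple_comp => /map_tuple_inj -> //; exact: rshift_inj.
Qed.

Lemma connected_hom_dunion (T B C : st) :
  connected T -> hom T (dunion B C) -> hom T B \/ hom T C.
Proof.
move=> [[w0 Tw0] connT] [f homf].
pose side (w : inode T) : bool :=
  match w with
  | inl x => f x < vn B
  | inr b => map_tuple f (tagged b) \in lshift_rels B C (tag b)
  end.
have side_closed : closed (@iedge S ar T) side.
  move=> [x | [s t]] [y | [s' t']] //=; rewrite /iedge /= ?andbF // => /andP[Tt xt];
    rewrite -!topredE /= (dunion_rels_side (homf _ _ Tt)) ?map_f //.
have side_const w : in_graph w -> side w = side w0.
  by move=> Tw; apply/esym/(closed_connect side_closed)/connT.
case side0: (side w0); [left; apply: (hom_of_lshift (f := f)) |
                         right; apply: (hom_of_rshift (f := f))].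
- by move=> x; have := side_const (inl x) isT; rewrite side0.
- by move=> s t Tt; have := side_const (inr (existT _ s t)) Tt; rewrite side0.
- by move=> x; have := side_const (inl x) isT; rewrite side0 => /negbT; rewrite -leqNgt.
- move=> s t Tt; have := side_const (inr (existT _ s t)) Tt; rewrite side0 /=.
  by case/setUP: (homf s t Tt) => ->.
Qed.

Lemma iedge_sym (A : st) : symmetric (@iedge S ar A).
Proof. by move=> [x | b] [y | c]; rewrite /iedge //= andbCA. Qed.

Lemma incidence_component_rels (A : st) (u : inode A) s t x :
  t \in rels A s -> x \in t ->
  connect (@iedge S ar A) u (inl x) = connect (@iedge S ar A) u (inr (existT _ s t)).
Proof.
move=> At xt; apply: (connect_closed (sym_connect_sym (@iedge_sym A)) u).
by rewrite /iedge /= At xt.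
Qed.

Definition empty_struct : st := {| vn := 0; rels := fun s => set0 |}.

Lemma connected_not_hom_empty T : connected T -> ~ hom T empty_struct.
Proof.
move=> [[[x | [s t]] Tw] _] [f homf]; first by case: (f x).
by have := homf s t Tw; rewrite inE.
Qed.

Section AntichainDuality.
Variables (O D : st -> Prop).
Hypothesis dualOD : antichain_duality O D.

Lemma dual_no_obstruction B : D B -> ~ exists2 T, O T & hom T B.
Proof. by move=> DB; apply/dualOD.1; exists B => //; exact: hom_refl. Qed.

Lemma obstruction_not_hom_proper_substruct T T' (V : {set 'I_(vn T)}) keep :
  O T -> is_core T -> O T' -> proper_substruct V keep ->
  ~ hom T' (@substruct T V keep).
Proof.
move=> OT coreT OT' proper T'_V.
have T'T := hom_trans T'_V (substruct_hom V keep).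
have eqT' := antichain_hom_eq dualOD.2 (or_introl OT') (or_introl OT) T'T.
by subst T'; exact: core_not_hom_proper_substruct coreT proper T'_V.
Qed.

Lemma connected_obstructions_of_singleton_dual D0 :
  (forall T, O T -> is_core T) -> (forall B, D B <-> B = D0) ->
  forall T, O T -> connected T.
Proof.
move=> coreO D_D0 T OT.
have not_T_D0 : ~ hom T D0.
  have DD0 : D D0 by apply/D_D0.
  by move=> T_D0; apply: (dual_no_obstruction DD0); exists T.
have to_D0 A : ~ (exists2 T', O T' & hom T' A) -> hom A D0.
  by move/dualOD.1 => [B /D_D0 ->].
split=> [|u v Tu Tv].
  by apply: NNPP => /hom_of_empty_incidence T_D0; exact: not_T_D0.
apply: NNPP => not_uv; apply: not_T_D0.
pose comp := connect (@iedge S ar T) u.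
pose V : {set 'I_(vn T)} := [set x | comp (inl x)].
pose keep s (t : (ar s).-tuple 'I_(vn T)) := comp (inr (existT _ s t)).
have not_hom_proper keep' (V' : {set 'I_(vn T)}) : proper_substruct V' keep' ->
    hom (@substruct T V' keep') D0.
  move=> proper; apply: to_D0 => -[T' OT'].
  exact: obstruction_not_hom_proper_substruct OT (coreO T OT) OT' proper.
apply: (hom_glue (V := V) (keep := keep)).
- by move=> s t Tt keep_t x xt; rewrite inE /comp (incidence_component_rels u Tt xt).
- by move=> s t Tt keep_t x xt; rewrite !inE /comp (incidence_component_rels u Tt xt).
- apply: not_hom_proper; case: v Tv not_uv => [x | [s t]] Tv /negP not_uv.
  + by left; exists x; rewrite inE.
  + by right; exists s, t.
- apply: not_hom_proper; case Eu: u Tu => [x | [s t]] Tu.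
  + by left; exists x; rewrite !inE /comp Eu connect0.
  + by right; exists s, t; rewrite /keep /comp Eu connect0.
Qed.

Lemma singleton_dual_of_connected_obstructions :
  (forall T, O T -> connected T) -> exists D0, forall B, D B <-> B = D0.
Proof.
move=> connO.
have [D0 DD0 _] : exists2 D0, D D0 & hom empty_struct D0.
  by apply/dualOD.1 => -[T /connO /connected_not_hom_empty].
exists D0 => B; split=> [DB|->] //.
have [D1 DD1 BD0_D1] : exists2 D1, D D1 & hom (dunion B D0) D1.
  apply/dualOD.1 => -[T OT /(connected_hom_dunion (connO T OT))] [T_B | T_D0].
  - by apply: (dual_no_obstruction DB); exists T.
  - by apply: (dual_no_obstruction DD0); exists T.
have D1_eq A : D A -> hom A (dunion B D0) -> A = D1.
  move=> DA /hom_trans /(_ BD0_D1).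
  exact: antichain_hom_eq dualOD.2 (or_intror DA) (or_intror DD1).
by rewrite (D1_eq B DB (hom_dunionl B D0)) (D1_eq D0 DD0 (hom_dunionr B D0)).
Qed.

End AntichainDuality.
End Duality.

Theorem lemma5p2 (S : finType) (ar : S -> nat) (O D : struct ar -> Prop) :
  antichain_duality O D ->
  (forall T, O T -> is_core T) ->
  ((exists D0 : struct ar, forall B, D B <-> B = D0) <->
   (forall T, O T -> connected T)).
Proof.
move=> dualOD coreO; split.
- by case=> D0 D_D0; apply: (connected_obstructions_of_singleton_dual dualOD coreO D_D0).
- exact: singleton_dual_of_connected_obstructions.
Qed.
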